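(* Min-Makespan CMP can be solved in $\mathcal{O}(1)$ time for two robots.
   Context: Robots are axis-parallel unit squares in $\mathbb{R}^2$: a robot at position $p$ occupies $p+\boxdot$, $\boxdot=\{q:\|q\|_\infty\le 1/2\}$. Distances are measured in the $L_1$ norm $\|p\|=|x(p)|+|y(p)|$. A configuration of $k$ robots is a tuple $(p_1,\dots,p_k)$ with $\|p_i-p_j\|_\infty\ge 1$ for $i\ne j$; $\mathcal{F}_k$ is the set of configurations. A trajectory over $T=[t_0,t_1]$ is a $1$-Lipschitz (w.r.t. $L_1$) map $m:T\to\mathbb{R}^2$ whose image is a polygonal chain; a schedule is a tuple $M=(m_1,\dots,m_k)$ of trajectories over $T$, feasible if $M(t)\in\mathcal{F}_k$ for all $t\in T$; its makespan is $t_1-t_0$. Min-Makespan CMP: given $A,B\in\mathcal{F}_k$, find the minimum makespan of a feasible schedule from $A$ to $B$ (and such a schedule). *)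

From Stdlib Require Import Reals ZArith List.
Open Scope R_scope.

Definition pt : Type := (R * R)%type.
Definition padd (p q : pt) : pt := (fst p + fst q, snd p + snd q).
Definition psub (p q : pt) : pt := (fst p - fst q, snd p - snd q).
Definition pscale (l : R) (p : pt) : pt := (l * fst p, l * snd p).
Definition norm1 (p : pt) : R := Rabs (fst p) + Rabs (snd p).
(** L-infinity norm (used for the non-overlap condition of unit squares) *)
Definition norminf (p : pt) : R := Rmax (Rabs (fst p)) (Rabs (snd p)).

Definition is_config (k : nat) (P : nat -> pt) : Prop :=
  forall i j, (i < k)%nat -> (j < k)%nat -> i <> j ->
    norminf (psub (P i) (P j)) >= 1.

Definition on_segment (a b p : pt) : Prop :=
  exists l, 0 <= l <= 1 /\ p = padd a (pscale l (psub b a)).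

Fixpoint on_chain (q0 : pt) (qs : list pt) (p : pt) : Prop :=
  match qs with
  | nil => p = q0
  | q1 :: qs' => on_segment q0 q1 p \/ on_chain q1 qs' p
  end.

Definition trajectory (t0 t1 : R) (m : R -> pt) : Prop :=
  t0 <= t1 /\
  (forall s t, t0 <= s <= t1 -> t0 <= t <= t1 ->
      norm1 (psub (m s) (m t)) <= Rabs (s - t)) /\
  (exists q0 qs, forall p,
      (exists t, t0 <= t <= t1 /\ m t = p) <-> on_chain q0 qs p).

Definition schedule (k : nat) (t0 t1 : R) (M : nat -> R -> pt) : Prop :=
  t0 <= t1 /\ forall i, (i < k)%nat -> trajectory t0 t1 (M i).

Definition feasible (k : nat) (t0 t1 : R) (M : nat -> R -> pt) : Prop :=
  schedule k t0 t1 M /\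
  forall t, t0 <= t <= t1 -> is_config k (fun i => M i t).

Definition feasible_from_to (k : nat) (A B : nat -> pt) (t0 t1 : R)
    (M : nat -> R -> pt) : Prop :=
  feasible k t0 t1 M /\
  forall i, (i < k)%nat -> M i t0 = A i /\ M i t1 = B i.

(** * Constant-time algorithms (real-RAM straight-line programs with
      branching): a fixed finite arithmetic expression over the input reals,
      built from the inputs, integer constants, +, -, *, / and
      comparison-based branching.  Since the expression is fixed (independent
      of the input), evaluating it takes O(1) operations. *)
Inductive rterm : Type :=
  | TVar : nat -> rterm
  | TCst : Z -> rterm
  | TAdd : rterm -> rterm -> rterm
  | TSub : rterm -> rterm -> rterm
  | TMul : rterm -> rterm -> rterm
  | TDiv : rterm -> rterm -> rterm
  | TIte : rterm -> rterm -> rterm -> rterm -> rterm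
      .

Fixpoint reval (env : nat -> R) (t : rterm) : R :=
  match t with
  | TVar n => env n
  | TCst z => IZR z
  | TAdd a b => reval env a + reval env b
  | TSub a b => reval env a - reval env b
  | TMul a b => reval env a * reval env b
  | TDiv a b => reval env a / reval env b
  | TIte a b u v =>
      if Rle_dec (reval env a) (reval env b) then reval env u else reval env v
  end.

Definition input2 (A B : nat -> pt) : nat -> R :=
  fun n => match n with
           | 0 => fst (A 0%nat) | 1 => snd (A 0%nat)
           | 2 => fst (A 1%nat) | 3 => snd (A 1%nat)
           | 4 => fst (B 0%nat) | 5 => snd (B 0%nat)
           | 6 => fst (B 1%nat) | 7 => snd (B 1%nat)
           | _ => 0
           end.

Definition follows_pl (k K : nat) (tau : nat -> R) (P : nat -> nat -> pt)
    (M : nat -> R -> pt) : Prop :=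
  (forall j, (j < K)%nat -> tau j <= tau (S j)) /\
  (forall i j, (i < k)%nat -> (j <= K)%nat -> M i (tau j) = P i j) /\
  (forall i j t, (i < k)%nat -> (j < K)%nat -> tau j < tau (S j) ->
      tau j <= t <= tau (S j) ->
      M i t = padd (P i j)
                (pscale ((t - tau j) / (tau (S j) - tau j))
                        (psub (P i (S j)) (P i j)))).

From Stdlib Require Import Reals ZArith List Lra Lia Classical.
Open Scope R_scope.

(** In the rotated coordinates [u = x + y], [v = x - y] the L1 norm becomes
    [max (|du|, |dv|)], and two robots overlap exactly when the gap between them
    lies in the diamond [|du| + |dv| < 2].  Every coordinate of every robot is
    1-Lipschitz in time, so for any two intermediate times the gaps [w1], [w2]
    at those times bound the makespan from below: on each of the three pieces
    the change of the gap in a coordinate plus the change of the sum of the two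
    robots' coordinates is at most twice the length of the piece.  A gap that
    has to change quadrant cannot cross the diamond, so it meets the axes at
    distance at least 2; minimising the bound over these forced crossings gives
    explicit waypoints.  Conversely, when consecutive waypoints share a closed
    quadrant, the straight segments between them avoid the diamond, and three
    linear legs whose durations split the slack evenly, with the sum coordinates
    spread over the legs in proportion to their spare capacity, form a feasible
    schedule of duration exactly the bound. *)

Lemma Rabs_cases x : (0 <= x /\ Rabs x = x) \/ (x < 0 /\ Rabs x = - x).
Proof.
  destruct (Rle_lt_dec 0 x).
  - left; split; [lra | apply Rabs_right; lra].
  - right; split; [lra | apply Rabs_left; lra].
Qed.

Lemma Rmax_cases a b : (a <= b /\ Rmax a b = b) \/ (b < a /\ Rmax a b = a).
Proof. unfold Rmax; destruct (Rle_dec a b); [left | right]; split; auto; lra. Qed.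

Lemma Rmin_cases a b : (a <= b /\ Rmin a b = a) \/ (b < a /\ Rmin a b = b).
Proof. unfold Rmin; destruct (Rle_dec a b); [left | right]; split; auto; lra. Qed.

Ltac case_eq_split H :=
  let E := fresh in destruct H as [[? E] | [? E]]; rewrite E in *; clear E; try (exfalso; lra).

Ltac case_split_R :=
  repeat match goal with
  | |- context [if Rle_dec ?a ?b then _ else _] => destruct (Rle_dec a b); try (exfalso; lra)
  | _ : context [if Rle_dec ?a ?b then _ else _] |- _ => destruct (Rle_dec a b); try (exfalso; lra)
  | |- context [Rmax ?a ?b] => case_eq_split (Rmax_cases a b)
  | _ : context [Rmax ?a ?b] |- _ => case_eq_split (Rmax_cases a b)
  | |- context [Rmin ?a ?b] => case_eq_split (Rmin_cases a b)
  | _ : context [Rmin ?a ?b] |- _ => case_eq_split (Rmin_cases a b)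
  | |- context [Rabs ?x] => case_eq_split (Rabs_cases x)
  | _ : context [Rabs ?x] |- _ => case_eq_split (Rabs_cases x)
  end.

(** * Rotated coordinates *)

Definition ucoord (z : pt) : R := fst z + snd z.
Definition vcoord (z : pt) : R := fst z - snd z.

Definition apart (du dv : R) : Prop := 2 <= Rabs du + Rabs dv.

Definition coord (c : bool) (z : pt) : R := if c then ucoord z else vcoord z.

Lemma norm1_le_of_coords z z' d :
  (forall c, Rabs (coord c z' - coord c z) <= d) -> norm1 (psub z' z) <= d.
Proof.
  intros H. pose proof (H true) as Hu. pose proof (H false) as Hv. revert Hu Hv.
  destruct z, z'; unfold coord, ucoord, vcoord, norm1, psub; simpl; intros; case_split_R; lra.
Qed.

Lemma uv_le_norm1 z z' :
  Rabs (ucoord z - ucoord z') <= norm1 (psub z z') /\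
  Rabs (vcoord z - vcoord z') <= norm1 (psub z z').
Proof. destruct z, z'; unfold ucoord, vcoord, norm1, psub; simpl; split; case_split_R; lra. Qed.

Lemma norminf_ge1_of_apart z z' :
  apart (ucoord z - ucoord z') (vcoord z - vcoord z') -> norminf (psub z z') >= 1.
Proof.
  destruct z, z'; unfold apart, ucoord, vcoord, norminf, psub; simpl; intros; case_split_R; lra.
Qed.

Lemma norminf_psub_sym z z' : norminf (psub z z') = norminf (psub z' z).
Proof.
  destruct z, z'; unfold norminf, psub; simpl.
  rewrite (Rabs_minus_sym r r1), (Rabs_minus_sym r0 r2). reflexivity.
Qed.

Lemma apart_of_norminf_ge1 z z' :
  norminf (psub z z') >= 1 -> apart (ucoord z' - ucoord z) (vcoord z' - vcoord z).
Proof.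
  destruct z, z'; unfold apart, ucoord, vcoord, norminf, psub; simpl; intros; case_split_R; lra.
Qed.

Lemma norm1_ge0 z : 0 <= norm1 z.
Proof. destruct z; unfold norm1; simpl. pose proof (Rabs_pos r); pose proof (Rabs_pos r0); lra. Qed.

Lemma norm1_psub_sym z z' : norm1 (psub z z') = norm1 (psub z' z).
Proof.
  destruct z, z'; unfold norm1, psub; simpl.
  rewrite (Rabs_minus_sym r r1), (Rabs_minus_sym r0 r2). reflexivity.
Qed.

Lemma norm1_psub_triang z z' z'' :
  norm1 (psub z z'') <= norm1 (psub z z') + norm1 (psub z' z'').
Proof.
  destruct z, z', z''; unfold norm1, psub; simpl.
  pose proof (Rabs_triang (r - r1) (r1 - r3)). pose proof (Rabs_triang (r0 - r2) (r2 - r4)).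
  replace (r - r3) with ((r - r1) + (r1 - r3)) by ring.
  replace (r0 - r4) with ((r0 - r2) + (r2 - r4)) by ring. lra.
Qed.

Lemma norm1_psub_le0 z z' : norm1 (psub z z') <= 0 -> z = z'.
Proof. destruct z, z'; unfold norm1, psub; simpl; intros; case_split_R; f_equal; lra. Qed.

Lemma norm1_pscale l z : norm1 (pscale l z) = Rabs l * norm1 z.
Proof. destruct z; unfold norm1, pscale; simpl. rewrite !Rabs_mult. ring. Qed.

(** For [ta = tb] the ratio is [x / 0 = 0], so [lerp] stays at [z0]. *)
Definition lerp (z0 z1 : pt) (ta tb t : R) : pt :=
  padd z0 (pscale ((t - ta) / (tb - ta)) (psub z1 z0)).

Definition lip1 (m : R -> pt) (a b : R) : Prop :=
  forall s t, a <= s <= b -> a <= t <= b -> norm1 (psub (m s) (m t)) <= Rabs (s - t).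

Lemma ratio_in_unit ta tb t : ta <= t <= tb -> 0 <= (t - ta) / (tb - ta) <= 1.
Proof.
  intros Ht. destruct (Req_dec ta tb) as [<- | Hne].
  - replace (t - ta) with 0 by lra. unfold Rdiv. lra.
  - split.
    + unfold Rdiv. apply Rmult_le_pos; [lra | apply Rlt_le, Rinv_0_lt_compat; lra].
    + apply (Rmult_le_reg_r (tb - ta)); [lra |].
      unfold Rdiv. rewrite Rmult_assoc, Rinv_l by lra. lra.
Qed.

Lemma lerp_start z0 z1 ta tb : lerp z0 z1 ta tb ta = z0.
Proof.
  destruct z0, z1; unfold lerp, padd, pscale, psub; simpl.
  replace (ta - ta) with 0 by ring. unfold Rdiv. f_equal; ring.
Qed.

Lemma lerp_end z0 z1 ta tb :
  ta <= tb -> norm1 (psub z1 z0) <= tb - ta -> lerp z0 z1 ta tb tb = z1.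
Proof.
  intros Hab HN. destruct (Req_dec ta tb) as [<- | Hne].
  - rewrite lerp_start. symmetry; apply norm1_psub_le0. lra.
  - destruct z0, z1; unfold lerp, padd, pscale, psub; simpl.
    replace ((tb - ta) / (tb - ta)) with 1 by (field; lra). f_equal; ring.
Qed.

Lemma lerp_lip1 z0 z1 ta tb :
  norm1 (psub z1 z0) <= tb - ta -> lip1 (lerp z0 z1 ta tb) ta tb.
Proof.
  intros HN s t Hs Ht.
  assert (Hdiff : psub (lerp z0 z1 ta tb s) (lerp z0 z1 ta tb t)
                  = pscale ((s - t) / (tb - ta)) (psub z1 z0)).
  { destruct z0, z1; unfold lerp, padd, pscale, psub; simpl. f_equal; unfold Rdiv; ring. }
  rewrite Hdiff, norm1_pscale. pose proof (norm1_ge0 (psub z1 z0)).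
  destruct (Req_dec ta tb) as [<- | Hne].
  - replace (norm1 (psub z1 z0)) with 0 by lra. rewrite Rmult_0_r. apply Rabs_pos.
  - unfold Rdiv.
    rewrite Rabs_mult, (Rabs_right (/ (tb - ta))) by (apply Rle_ge, Rlt_le, Rinv_0_lt_compat; lra).
    assert (/ (tb - ta) * norm1 (psub z1 z0) <= 1).
    { apply (Rmult_le_reg_l (tb - ta)); [lra |].
      rewrite <- Rmult_assoc, Rinv_r by lra. lra. }
    assert (0 <= / (tb - ta) * norm1 (psub z1 z0))
      by (apply Rmult_le_pos; [apply Rlt_le, Rinv_0_lt_compat; lra | lra]).
    pose proof (Rabs_pos (s - t)). nra.
Qed.

Lemma lip1_ext m m' a b :
  (forall t, a <= t <= b -> m t = m' t) -> lip1 m' a b -> lip1 m a b.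
Proof. intros E L s t Hs Ht. rewrite !E by auto. auto. Qed.

Lemma lip1_concat m a b c : a <= b <= c -> lip1 m a b -> lip1 m b c -> lip1 m a c.
Proof.
  intros Hb L1 L2.
  assert (Hle : forall s t, a <= s <= t -> t <= c -> norm1 (psub (m s) (m t)) <= t - s).
  { intros s t Hs Ht.
    destruct (Rle_dec t b); [| destruct (Rle_dec s b)].
    - eapply Rle_trans; [apply L1; lra |]. rewrite Rabs_left1; lra.
    - pose proof (norm1_psub_triang (m s) (m b) (m t)).
      pose proof (L1 s b ltac:(lra) ltac:(lra)). pose proof (L2 b t ltac:(lra) ltac:(lra)).
      rewrite Rabs_left1 in * by lra. lra.
    - eapply Rle_trans; [apply L2; lra |]. rewrite Rabs_left1; lra. }
  intros s t Hs Ht. destruct (Rle_dec s t).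
  - rewrite Rabs_left1 by lra. pose proof (Hle s t ltac:(lra) ltac:(lra)). lra.
  - rewrite norm1_psub_sym, Rabs_right by lra. apply Hle; lra.
Qed.

Lemma lerp_on_segment z0 z1 ta tb t :
  ta <= t <= tb -> on_segment z0 z1 (lerp z0 z1 ta tb t).
Proof. intros. exists ((t - ta) / (tb - ta)). split; [apply ratio_in_unit; lra | reflexivity]. Qed.

Lemma lerp_onto z0 z1 ta tb p : ta <= tb -> norm1 (psub z1 z0) <= tb - ta ->
  on_segment z0 z1 p -> exists t, ta <= t <= tb /\ lerp z0 z1 ta tb t = p.
Proof.
  intros Hab HN [l [Hl ->]]. destruct (Req_dec ta tb) as [<- | Hne].
  - exists ta. split; [lra |]. rewrite lerp_start.
    assert (z1 = z0) as -> by (apply norm1_psub_le0; lra).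
    destruct z0; unfold padd, pscale, psub; simpl. f_equal; ring.
  - exists (ta + l * (tb - ta)). split; [nra |].
    unfold lerp. f_equal. f_equal. field. lra.
Qed.

Definition path3 (z0 z1 z2 z3 : pt) (t1 t2 t3 t : R) : pt :=
  if Rle_dec t t1 then lerp z0 z1 0 t1 t
  else if Rle_dec t t2 then lerp z1 z2 t1 t2 t else lerp z2 z3 t2 t3 t.

Section Path3.
Variables (z0 z1 z2 z3 : pt) (t1 t2 t3 : R).
Hypotheses (H01 : 0 <= t1) (H12 : t1 <= t2) (H23 : t2 <= t3).
Hypotheses (N01 : norm1 (psub z1 z0) <= t1 - 0) (N12 : norm1 (psub z2 z1) <= t2 - t1)
  (N23 : norm1 (psub z3 z2) <= t3 - t2).
Local Notation m := (path3 z0 z1 z2 z3 t1 t2 t3).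

Lemma path3_leg1 t : t <= t1 -> m t = lerp z0 z1 0 t1 t.
Proof. intros. unfold path3. destruct (Rle_dec t t1); [reflexivity | lra]. Qed.

Lemma path3_leg2 t : t1 <= t <= t2 -> m t = lerp z1 z2 t1 t2 t.
Proof.
  intros. unfold path3. destruct (Rle_dec t t1).
  - replace t with t1 by lra. rewrite lerp_end, lerp_start by lra. reflexivity.
  - destruct (Rle_dec t t2); [reflexivity | lra].
Qed.

Lemma path3_leg3 t : t2 <= t -> m t = lerp z2 z3 t2 t3 t.
Proof.
  intros. unfold path3. destruct (Rle_dec t t1); [| destruct (Rle_dec t t2)].
  - replace t with t1 by lra. replace t2 with t1 in * by lra.
    rewrite lerp_end, lerp_start by lra. apply norm1_psub_le0. rewrite norm1_psub_sym. lra.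
  - replace t with t2 by lra. rewrite lerp_end, lerp_start by lra. reflexivity.
  - reflexivity.
Qed.

Lemma path3_at0 : m 0 = z0.
Proof. rewrite path3_leg1 by lra. apply lerp_start. Qed.
Lemma path3_at1 : m t1 = z1.
Proof. rewrite path3_leg2 by lra. apply lerp_start. Qed.
Lemma path3_at2 : m t2 = z2.
Proof. rewrite path3_leg3 by lra. apply lerp_start. Qed.
Lemma path3_at3 : m t3 = z3.
Proof. rewrite path3_leg3 by lra. apply lerp_end; lra. Qed.

Lemma path3_lip1 : lip1 m 0 t3.
Proof.
  apply (lip1_concat _ 0 t2); [lra | apply (lip1_concat _ 0 t1); [lra | |] |].
  - apply (lip1_ext _ (lerp z0 z1 0 t1)); [intros; apply path3_leg1; lra | apply lerp_lip1; lra].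
  - apply (lip1_ext _ (lerp z1 z2 t1 t2)); [intros; apply path3_leg2; lra | apply lerp_lip1; lra].
  - apply (lip1_ext _ (lerp z2 z3 t2 t3)); [intros; apply path3_leg3; lra | apply lerp_lip1; lra].
Qed.

Lemma path3_trajectory : trajectory 0 t3 m.
Proof.
  split; [lra | split; [exact path3_lip1 |]].
  exists z0, (z1 :: z2 :: z3 :: nil). intros p. simpl. split.
  - intros [t [Ht <-]].
    destruct (Rle_dec t t1); [| destruct (Rle_dec t t2)].
    + left. rewrite path3_leg1 by lra. apply lerp_on_segment; lra.
    + right; left. rewrite path3_leg2 by lra. apply lerp_on_segment; lra.
    + right; right; left. rewrite path3_leg3 by lra. apply lerp_on_segment; lra.
  - intros [Hp | [Hp | [Hp | ->]]].
    + destruct (lerp_onto _ _ 0 t1 p H01 N01 Hp) as [t [Ht <-]].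
      exists t. split; [lra | apply path3_leg1; lra].
    + destruct (lerp_onto _ _ t1 t2 p H12 N12 Hp) as [t [Ht <-]].
      exists t. split; [lra | apply path3_leg2; lra].
    + destruct (lerp_onto _ _ t2 t3 p H23 N23 Hp) as [t [Ht <-]].
      exists t. split; [lra | apply path3_leg3; lra].
    + exists t3. split; [lra | apply path3_at3].
Qed.

End Path3.

(** * Zero crossings of Lipschitz functions *)

Definition lipschitz (K : R) (f : R -> R) (a b : R) : Prop :=
  forall s t, a <= s <= b -> a <= t <= b -> Rabs (f s - f t) <= K * Rabs (s - t).

Lemma lipschitz_restrict K f a b a' b' :
  lipschitz K f a b -> a <= a' -> b' <= b -> lipschitz K f a' b'.
Proof. intros L ? ? s t ? ?. apply L; lra. Qed.

Lemma Rmin_pos d e : 0 < d -> 0 < e -> 0 < Rmin d e /\ Rmin d e <= d /\ Rmin d e <= e.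
Proof. intros. split; [apply Rmin_glb_lt; auto | split; [apply Rmin_l | apply Rmin_r]]. Qed.

Lemma lipschitz_pos_nbhd K g a b r : 0 <= K -> lipschitz K g a b -> a <= r <= b -> 0 < g r ->
  exists d, 0 < d /\ forall t, a <= t <= b -> Rabs (t - r) <= d -> 0 < g t.
Proof.
  intros HK L Hr Hg. exists (g r / (2 * (K + 1))). split.
  - apply Rdiv_lt_0_compat; lra.
  - intros t Ht Hd. specialize (L t r Ht Hr).
    assert (K * Rabs (t - r) < g r).
    { apply Rle_lt_trans with (K * (g r / (2 * (K + 1)))); [apply Rmult_le_compat_l; lra |].
      assert (0 < g r / (2 * (K + 1))) by (apply Rdiv_lt_0_compat; lra).
      replace (g r) with (2 * (K + 1) * (g r / (2 * (K + 1)))) at 2 by (field; lra). nra. }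
    case_split_R; lra.
Qed.

Lemma lipschitz_neg_nbhd K g a b r : 0 <= K -> lipschitz K g a b -> a <= r <= b -> g r < 0 ->
  exists d, 0 < d /\ forall t, a <= t <= b -> Rabs (t - r) <= d -> g t < 0.
Proof.
  intros HK L Hr Hg.
  destruct (lipschitz_pos_nbhd K (fun t => - g t) a b r HK) as [d [Hd Hpos]]; auto; [| lra |].
  - intros s t Hs Ht. rewrite <- Rabs_Ropp.
    replace (- (- g s - - g t)) with (g s - g t) by ring. auto.
  - exists d. split; auto. intros t Ht Htr. specialize (Hpos t Ht Htr). lra.
Qed.

Lemma lipschitz_first_zero K g a b : 0 <= K -> lipschitz K g a b -> a <= b ->
  0 < g a -> g b <= 0 -> exists r, a < r <= b /\ g r = 0 /\ forall t, a <= t < r -> 0 < g t.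
Proof.
  intros HK L Hab Ha Hb.
  set (E := fun x => a <= x <= b /\ forall t, a <= t <= x -> 0 < g t).
  assert (Ea : E a) by (split; [lra | intros t Ht; replace t with a by lra; auto]).
  destruct (completeness E) as [r [Hub Hlub]].
  { exists b. intros x [Hx _]. lra. }
  { exists a. exact Ea. }
  assert (Hr : a <= r <= b) by (split; [apply Hub; auto | apply Hlub; intros x [Hx _]; lra]).
  assert (Hbelow : forall t, a <= t < r -> 0 < g t).
  { intros t Ht. apply NNPP. intros Hn. assert (r <= t); [| lra].
    apply Hlub. intros x [Hx Hpos]. destruct (Rle_lt_dec x t); auto.
    exfalso. apply Hn, Hpos. lra. }
  assert (Hle : g r <= 0).
  { apply Rnot_lt_le. intros Hgt.
    destruct (lipschitz_pos_nbhd K g a b r HK L Hr Hgt) as [d [Hd Hpos]].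
    assert (Hrb : r < b) by (destruct (Req_dec r b); [subst; lra | lra]).
    destruct (Rmin_pos d (b - r) Hd ltac:(lra)) as [He0 [He1 He2]].
    assert (Er : E (r + Rmin d (b - r))).
    { split; [lra |]. intros t Ht. destruct (Rlt_le_dec t r); [apply Hbelow; lra |].
      apply Hpos; [lra |]. rewrite Rabs_right; lra. }
    pose proof (Hub _ Er). lra. }
  assert (Hge : 0 <= g r).
  { apply Rnot_lt_le. intros Hlt.
    destruct (lipschitz_neg_nbhd K g a b r HK L Hr Hlt) as [d [Hd Hneg]].
    assert (Har : a < r) by (destruct (Req_dec a r); [subst; lra | lra]).
    destruct (Rmin_pos d (r - a) Hd ltac:(lra)) as [He0 [He1 He2]].
    pose proof (Hbelow (r - Rmin d (r - a)) ltac:(lra)).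
    assert (g (r - Rmin d (r - a)) < 0) by (apply Hneg; [lra | rewrite Rabs_left1; lra]).
    lra. }
  exists r. split; [| split; [lra | auto]].
  split; [| lra]. destruct (Req_dec a r); [subst; lra | lra].
Qed.

Lemma lipschitz_last_zero K g a b : 0 <= K -> lipschitz K g a b -> a <= b ->
  0 <= g a -> g b < 0 -> exists s, a <= s < b /\ g s = 0 /\ forall t, s < t <= b -> g t < 0.
Proof.
  intros HK L Hab Ha Hb.
  set (h := fun t => - g (a + b - t)).
  assert (Lh : lipschitz K h a b).
  { intros s t Hs Ht. unfold h. rewrite <- Rabs_Ropp.
    replace (- (- g (a + b - s) - - g (a + b - t))) with (g (a + b - s) - g (a + b - t)) by ring.
    replace (s - t) with (- ((a + b - s) - (a + b - t))) by ring. rewrite Rabs_Ropp.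
    apply L; lra. }
  assert (Hha : 0 < h a) by (unfold h; replace (a + b - a) with b by ring; lra).
  assert (Hhb : h b <= 0) by (unfold h; replace (a + b - b) with a by ring; lra).
  destruct (lipschitz_first_zero K h a b HK Lh Hab Hha Hhb) as [r [Hr [Hr0 Hpos]]].
  unfold h in Hr0, Hpos.
  exists (a + b - r). split; [lra | split; [lra |]].
  intros t Ht. specialize (Hpos (a + b - t) ltac:(lra)).
  replace (a + b - (a + b - t)) with t in Hpos by ring. lra.
Qed.

Lemma lipschitz_nonpos_of_neg_before K g a b s r : 0 <= K -> lipschitz K g a b ->
  a <= s < r -> r <= b -> (forall t, s < t < r -> g t < 0) -> g r <= 0.
Proof.
  intros HK L Hs Hr Hneg. apply Rnot_lt_le. intros Hgt.
  destruct (lipschitz_pos_nbhd K g a b r HK L ltac:(lra) Hgt) as [d [Hd Hpos]].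
  destruct (Rmin_pos d ((r - s) / 2) Hd ltac:(lra)) as [He0 [He1 He2]].
  pose proof (Hneg (r - Rmin d ((r - s) / 2)) ltac:(lra)).
  assert (0 < g (r - Rmin d ((r - s) / 2))) by (apply Hpos; [lra | rewrite Rabs_left1; lra]).
  lra.
Qed.

(** * The algorithm as a straight-line program *)

(** The algorithm is written once over an abstract signature: over [R_arith] it
    is the real function we reason about, over [term_arith] it builds the
    fixed [rterm] of the theorem, and [reval] maps the second to the first. *)
Record arith := {
  car : Type;
  oadd : car -> car -> car; osub : car -> car -> car;
  omul : car -> car -> car; odiv : car -> car -> car;
  ocst : Z -> car;
  oite : car -> car -> car -> car -> car }.

Definition R_arith : arith :=
  {| car := R; oadd := Rplus; osub := Rminus; omul := Rmult; odiv := Rdiv; ocst := IZR;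
     oite := fun a b u v => if Rle_dec a b then u else v |}.

Definition term_arith : arith :=
  {| car := rterm; oadd := TAdd; osub := TSub; omul := TMul; odiv := TDiv; ocst := TCst;
     oite := TIte |}.

Set Implicit Arguments.
Record inputs (C : Type) := Inputs {
  ax0 : C; ay0 : C; ax1 : C; ay1 : C; bx0 : C; by0 : C; bx1 : C; by1 : C }.
Unset Implicit Arguments.

Definition term_inputs : inputs rterm :=
  Inputs (TVar 0) (TVar 1) (TVar 2) (TVar 3) (TVar 4) (TVar 5) (TVar 6) (TVar 7).

Definition R_inputs (env : nat -> R) : inputs R :=
  Inputs (env 0%nat) (env 1%nat) (env 2%nat) (env 3%nat)
    (env 4%nat) (env 5%nat) (env 6%nat) (env 7%nat).

Definition real_inputs (A B : nat -> pt) : inputs R := R_inputs (input2 A B).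

Section Algorithm.
Variable O : arith.
Local Notation C := (car O).
Local Notation "a +' b" := (oadd O a b) (at level 50, left associativity).
Local Notation "a -' b" := (osub O a b) (at level 50, left associativity).
Local Notation "a *' b" := (omul O a b) (at level 40, left associativity).
Local Notation "a /' b" := (odiv O a b) (at level 40, left associativity).
Local Notation "# z" := (ocst O z) (at level 0).

Definition gneg (x : C) : C := #0 -' x.
Definition gabs (x : C) : C := oite O #0 x x (gneg x).
Definition gmax (a b : C) : C := oite O a b b a.
Definition gmin (a b : C) : C := oite O a b a b.
Definition ghalf (x : C) : C := x /' #2.
Definition gsgn (x : C) : C := oite O #0 x #1 #(-1).
Definition gmaxabs (a b : C) : C := gmax (gabs a) (gabs b).
Definition gclamp (x lo hi : C) : C := gmax lo (gmin x hi).

(** Lower bound on the makespan when the gap between the robots moves along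
    [p -> w1 -> w2 -> q] and the sum coordinates change by [su] and [sv]. *)
Definition gbound (pu pv w1u w1v w2u w2v qu qv su sv : C) : C :=
  ghalf (gmax (gmax (gabs (w1u -' pu) +' gabs (w2u -' w1u) +' gabs (qu -' w2u) +' su)
                    (gabs (w1v -' pv) +' gabs (w2v -' w1v) +' gabs (qv -' w2v) +' sv))
              (gmaxabs (w1u -' pu) (w1v -' pv) +' gmaxabs (w2u -' w1u) (w2v -' w1v)
                 +' gmaxabs (qu -' w2u) (qv -' w2v))).

(** Crossing point [(0, x)] of the positive v-axis when [p] and [q] lie in the
    quadrants [u >= 0] and [u <= 0] of the upper half-plane: the unclamped value
    balances the two L-infinity legs, the clamp keeps the v-variation minimal. *)
Definition gaxis_point (pu pv qu qv : C) : C :=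
  gclamp (oite O pv qv (ghalf (pu +' qu +' pv +' qv)) (ghalf (pv +' qv -' pu -' qu)))
         (gmax (gmin pv qv) #2) (gmax (gmax pv qv) #2).

(** Turning points [(0, b)] and [(-a, 0)] of a route from the quadrant
    [u, v >= 0] to the opposite one. *)
Definition gturn_cap (pu pv qu qv : C) : C := gmax #2 (gmin (pv -' pu) (qv -' qu)).
Definition gturn_a (pu pv qu qv : C) : C := gmin (gturn_cap pu pv qu qv) (gmax (gneg qu) #2).
Definition gturn_b (pu pv qu qv : C) : C := gmin (gturn_cap pu pv qu qv) (gmax pv #2).

Definition gsel4 (a b : C) (x y : C * C * C * C) : C * C * C * C :=
  let '(x1, x2, x3, x4) := x in let '(y1, y2, y3, y4) := y in
  (oite O a b x1 y1, oite O a b x2 y2, oite O a b x3 y3, oite O a b x4 y4).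

(** Waypoints [(w1u, w1v, w2u, w2v)] of the gap for [p] in the quadrant [u, v >= 0]:
    none if [q] is in the same quadrant, one axis crossing if it is in an adjacent
    one, and the cheaper of the two turning routes otherwise. *)
Definition gwaypoints_pos (pu pv qu qv su sv : C) : C * C * C * C :=
  gsel4 #0 qu
    (gsel4 #0 qv (pu, pv, pu, pv)
       (let b := gaxis_point pv pu qv qu in (b, #0, b, #0)))
    (gsel4 #0 qv
       (let b := gaxis_point pu pv qu qv in (#0, b, #0, b))
       (let aN := gturn_a pu pv qu qv in let bN := gturn_b pu pv qu qv in
        let aE := gturn_a pv pu qv qu in let bE := gturn_b pv pu qv qu in
        gsel4 (gbound pu pv #0 bN (gneg aN) #0 qu qv su sv)
              (gbound pu pv bE #0 #0 (gneg aE) qu qv su sv)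
          (#0, bN, gneg aN, #0) (bE, #0, #0, gneg aE))).

Definition gwaypoints (pu pv qu qv su sv : C) : C * C * C * C :=
  let eu := gsgn pu in let ev := gsgn pv in
  let '(w1u, w1v, w2u, w2v) :=
    gwaypoints_pos (eu *' pu) (ev *' pv) (eu *' qu) (ev *' qv) su sv in
  (eu *' w1u, ev *' w1v, eu *' w2u, ev *' w2v).

Variable i : inputs C.

Definition gcoord (c : bool) (x y : C) : C := if c then x +' y else x -' y.
Definition grel_start (c : bool) : C := gcoord c (ax1 i) (ay1 i) -' gcoord c (ax0 i) (ay0 i).
Definition grel_end (c : bool) : C := gcoord c (bx1 i) (by1 i) -' gcoord c (bx0 i) (by0 i).
Definition gsum_start (c : bool) : C := gcoord c (ax0 i) (ay0 i) +' gcoord c (ax1 i) (ay1 i).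
Definition gsum_shift (c : bool) : C :=
  (gcoord c (bx0 i) (by0 i) +' gcoord c (bx1 i) (by1 i)) -' gsum_start c.

Definition gwaypoints_of : C * C * C * C :=
  gwaypoints (grel_start true) (grel_start false) (grel_end true) (grel_end false)
    (gabs (gsum_shift true)) (gabs (gsum_shift false)).

Variable w : C * C * C * C.

Definition gwp (c : bool) (k : nat) : C :=
  let '(w1u, w1v, w2u, w2v) := w in
  match k with
  | 0 => grel_start c
  | 1 => if c then w1u else w1v
  | 2 => if c then w2u else w2v
  | _ => grel_end c
  end.

Definition gleg (c : bool) (k : nat) : C := gwp c (S k) -' gwp c k.
Definition gleg_len (k : nat) : C := gmaxabs (gleg true k) (gleg false k).
Definition gvariation (c : bool) : C := gabs (gleg c 0) +' gabs (gleg c 1) +' gabs (gleg c 2).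

Definition gmakespan : C :=
  gbound (gwp true 0) (gwp false 0) (gwp true 1) (gwp false 1) (gwp true 2) (gwp false 2)
    (gwp true 3) (gwp false 3) (gabs (gsum_shift true)) (gabs (gsum_shift false)).

Definition gslack : C := (gmakespan -' ghalf (gleg_len 0 +' gleg_len 1 +' gleg_len 2)) /' #3.
Definition gduration (k : nat) : C := ghalf (gleg_len k) +' gslack.

Definition gtime (j : nat) : C :=
  match j with
  | 0 => #0
  | 1 => gduration 0
  | 2 => gduration 0 +' gduration 1
  | _ => gmakespan
  end.

(** The shift of the sum coordinate is spread over the legs in proportion to
    the capacity [2 duration - |leg|] left by the relative motion. *)
Definition gshare (c : bool) (k : nat) : C :=
  gsum_shift c *' (#2 *' gduration k -' gabs (gleg c k)) /' (#2 *' gmakespan -' gvariation c).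

Definition gsum (c : bool) (j : nat) : C :=
  match j with
  | 1 => gsum_start c +' gshare c 0
  | _ => gsum_start c +' gshare c 0 +' gshare c 1
  end.

Definition grobot (r : nat) (s d : C) : C :=
  match r with 0 => ghalf (s -' d) | _ => ghalf (s +' d) end.

Definition gpos (r j : nat) : C * C :=
  match j with
  | 0 => match r with 0 => (ax0 i, ay0 i) | _ => (ax1 i, ay1 i) end
  | 1 | 2 =>
      let u := grobot r (gsum true j) (gwp true j) in
      let v := grobot r (gsum false j) (gwp false j) in
      (ghalf (u +' v), ghalf (u -' v))
  | _ => match r with 0 => (bx0 i, by0 i) | _ => (bx1 i, by1 i) end
  end.

End Algorithm.

Section Evaluation.
Variable env : nat -> R.
Local Notation rv := (reval env).

Definition rv4 (t : rterm * rterm * rterm * rterm) : R * R * R * R :=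
  let '(a, b, c, d) := t in (rv a, rv b, rv c, rv d).

Lemma rv4_gsel4 a b x y :
  rv4 (gsel4 term_arith a b x y) = gsel4 R_arith (rv a) (rv b) (rv4 x) (rv4 y).
Proof. destruct x as [[[? ?] ?] ?], y as [[[? ?] ?] ?]. reflexivity. Qed.

Lemma reval_gneg a : rv (gneg term_arith a) = gneg R_arith (rv a).
Proof. reflexivity. Qed.

Lemma reval_gbound a b c d e f g h k l :
  rv (gbound term_arith a b c d e f g h k l)
  = gbound R_arith (rv a) (rv b) (rv c) (rv d) (rv e) (rv f) (rv g) (rv h) (rv k) (rv l).
Proof. reflexivity. Qed.

Lemma reval_gaxis_point a b c d :
  rv (gaxis_point term_arith a b c d) = gaxis_point R_arith (rv a) (rv b) (rv c) (rv d).
Proof. reflexivity. Qed.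

Lemma reval_gturn_a a b c d :
  rv (gturn_a term_arith a b c d) = gturn_a R_arith (rv a) (rv b) (rv c) (rv d).
Proof. reflexivity. Qed.

Lemma reval_gturn_b a b c d :
  rv (gturn_b term_arith a b c d) = gturn_b R_arith (rv a) (rv b) (rv c) (rv d).
Proof. reflexivity. Qed.

Lemma rv4_gwaypoints_pos a b c d e f :
  rv4 (gwaypoints_pos term_arith a b c d e f)
  = gwaypoints_pos R_arith (rv a) (rv b) (rv c) (rv d) (rv e) (rv f).
Proof.
  unfold gwaypoints_pos. rewrite !rv4_gsel4. cbv zeta. cbn [rv4].
  rewrite !reval_gneg, !reval_gaxis_point, !reval_gbound, !reval_gturn_a, !reval_gturn_b.
  reflexivity.
Qed.

Lemma rv4_gwaypoints a b c d e f :
  rv4 (gwaypoints term_arith a b c d e f)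
  = gwaypoints R_arith (rv a) (rv b) (rv c) (rv d) (rv e) (rv f).
Proof.
  unfold gwaypoints. cbv zeta.
  pose proof (rv4_gwaypoints_pos
    (omul term_arith (gsgn term_arith a) a) (omul term_arith (gsgn term_arith b) b)
    (omul term_arith (gsgn term_arith a) c) (omul term_arith (gsgn term_arith b) d) e f) as H.
  change (rv (omul term_arith (gsgn term_arith ?x) ?y))
    with (omul R_arith (gsgn R_arith (rv x)) (rv y)) in H.
  rewrite <- H.
  destruct (gwaypoints_pos term_arith _ _ _ _ _ _) as [[[? ?] ?] ?]. reflexivity.
Qed.

Lemma rv4_gwaypoints_of :
  rv4 (gwaypoints_of term_arith term_inputs) = gwaypoints_of R_arith (R_inputs env).
Proof. apply rv4_gwaypoints. Qed.

Lemma reval_gtime w j :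
  rv (gtime term_arith term_inputs w j) = gtime R_arith (R_inputs env) (rv4 w) j.
Proof. destruct w as [[[? ?] ?] ?]. destruct j as [| [| [| j]]]; reflexivity. Qed.

Lemma reval_gpos w r j :
  (rv (fst (gpos term_arith term_inputs w r j)), rv (snd (gpos term_arith term_inputs w r j)))
  = gpos R_arith (R_inputs env) (rv4 w) r j.
Proof.
  destruct w as [[[? ?] ?] ?].
  destruct j as [| [| [| j]]]; destruct r as [| r]; reflexivity.
Qed.

End Evaluation.

(** * The lower bound *)

Definition maxabs (x y : R) : R := Rmax (Rabs x) (Rabs y).

Definition lbound (pu pv w1u w1v w2u w2v qu qv su sv : R) : R :=
  Rmax (Rmax (Rabs (w1u - pu) + Rabs (w2u - w1u) + Rabs (qu - w2u) + su)
             (Rabs (w1v - pv) + Rabs (w2v - w1v) + Rabs (qv - w2v) + sv))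
       (maxabs (w1u - pu) (w1v - pv) + maxabs (w2u - w1u) (w2v - w1v)
        + maxabs (qu - w2u) (qv - w2v)) / 2.

Definition lbound_via (pu pv qu qv su sv : R) (w : R * R * R * R) : R :=
  let '(w1u, w1v, w2u, w2v) := w in lbound pu pv w1u w1v w2u w2v qu qv su sv.

Lemma gabs_R x : gabs R_arith x = Rabs x.
Proof. unfold gabs, gneg; simpl. case_split_R; lra. Qed.

Lemma gmaxabs_R x y : gmaxabs R_arith x y = maxabs x y.
Proof. unfold gmaxabs. rewrite !gabs_R. reflexivity. Qed.

Lemma gbound_R pu pv w1u w1v w2u w2v qu qv su sv :
  gbound R_arith pu pv w1u w1v w2u w2v qu qv su sv = lbound pu pv w1u w1v w2u w2v qu qv su sv.
Proof. unfold gbound, gmaxabs. rewrite !gabs_R. reflexivity. Qed.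

Lemma lbound_mono tu tv l tu' tv' l' su sv : tu <= tu' -> tv <= tv' -> l <= l' ->
  Rmax (Rmax (tu + su) (tv + sv)) l / 2 <= Rmax (Rmax (tu' + su) (tv' + sv)) l' / 2.
Proof. intros. case_split_R; lra. Qed.

Lemma lbound_swap pu pv w1u w1v w2u w2v qu qv su sv :
  lbound pu pv w1u w1v w2u w2v qu qv su sv = lbound pv pu w1v w1u w2v w2u qv qu sv su.
Proof.
  unfold lbound, maxabs. rewrite (Rmax_comm (_ + su)), (Rmax_comm (Rabs (w1u - pu))),
    (Rmax_comm (Rabs (w2u - w1u))), (Rmax_comm (Rabs (qu - w2u))). reflexivity.
Qed.

Lemma lbound_flip e f pu pv w1u w1v w2u w2v qu qv su sv : Rabs e = 1 -> Rabs f = 1 ->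
  lbound (e * pu) (f * pv) w1u w1v w2u w2v (e * qu) (f * qv) su sv =
  lbound pu pv (e * w1u) (f * w1v) (e * w2u) (f * w2v) qu qv su sv.
Proof.
  intros He Hf.
  assert (Flip : forall g x y, Rabs g = 1 -> Rabs (g * x - y) = Rabs (x - g * y)).
  { intros g x y Hg. assert (Hgg : g * g = 1) by (case_split_R; nra).
    replace (g * x - y) with (g * (x - g * y) + (g * g - 1) * y) by ring.
    rewrite Hgg, Rminus_diag, Rmult_0_l, Rplus_0_r, Rabs_mult, Hg. ring. }
  assert (Scale : forall g x y, Rabs g = 1 -> Rabs (g * x - g * y) = Rabs (x - y)).
  { intros g x y Hg. rewrite <- Rmult_minus_distr_l, Rabs_mult, Hg. ring. }
  unfold lbound, maxabs. rewrite !(Scale e), !(Scale f), !(Flip e), !(Flip f) by auto.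
  reflexivity.
Qed.

Definition gap (U0 U1 : R -> R) (t : R) : R := U1 t - U0 t.
Definition drift (U0 U1 : R -> R) (a b : R) : R := Rabs ((U0 b + U1 b) - (U0 a + U1 a)).

(** [Ur], [Vr] are the rotated coordinates of robot [r] along a feasible schedule. *)
Record uv_motion (U0 U1 V0 V1 : R -> R) (a b : R) : Prop := {
  uvm_le : a <= b;
  uvm_U0 : lipschitz 1 U0 a b; uvm_U1 : lipschitz 1 U1 a b;
  uvm_V0 : lipschitz 1 V0 a b; uvm_V1 : lipschitz 1 V1 a b;
  uvm_apart : forall t, a <= t <= b -> apart (gap U0 U1 t) (gap V0 V1 t) }.

Lemma uv_motion_swap U0 U1 V0 V1 a b : uv_motion U0 U1 V0 V1 a b -> uv_motion V0 V1 U0 U1 a b.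
Proof.
  intros [? ? ? ? ? Hap]. split; auto.
  intros t Ht. specialize (Hap t Ht). unfold apart in *. lra.
Qed.

Lemma uv_motion_flip e f U0 U1 V0 V1 a b : Rabs e = 1 -> Rabs f = 1 ->
  uv_motion U0 U1 V0 V1 a b ->
  uv_motion (fun t => e * U0 t) (fun t => e * U1 t) (fun t => f * V0 t) (fun t => f * V1 t) a b.
Proof.
  intros He Hf [Hab L0 L1 L2 L3 Hap].
  assert (Scale : forall g c, Rabs c = 1 ->
            lipschitz 1 g a b -> lipschitz 1 (fun t => c * g t) a b).
  { intros g c Hc L s t Hs Ht. rewrite <- Rmult_minus_distr_l, Rabs_mult, Hc, Rmult_1_l. auto. }
  split; auto. intros t Ht. specialize (Hap t Ht). unfold apart, gap in *.
  rewrite <- !Rmult_minus_distr_l, !Rabs_mult, He, Hf. lra.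
Qed.

Lemma lipschitz_forward K f a b s t : lipschitz K f a b -> a <= s <= t -> t <= b ->
  Rabs (f t - f s) <= K * (t - s).
Proof.
  intros L Hs Ht. specialize (L t s ltac:(lra) ltac:(lra)). rewrite (Rabs_right (t - s)) in L; lra.
Qed.

Lemma lipschitz_gap U0 U1 a b :
  lipschitz 1 U0 a b -> lipschitz 1 U1 a b -> lipschitz 2 (gap U0 U1) a b.
Proof.
  intros L0 L1 s t Hs Ht. specialize (L0 s t Hs Ht). specialize (L1 s t Hs Ht).
  unfold gap. case_split_R; lra.
Qed.

Lemma gap_sum_step x y d : Rabs x <= d -> Rabs y <= d -> Rabs (y - x) + Rabs (y + x) <= 2 * d.
Proof. intros. case_split_R; lra. Qed.

Lemma gap_step x0 x1 y0 y1 d : Rabs (x1 - x0) <= d -> Rabs (y1 - y0) <= d ->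
  Rabs ((y1 - x1) - (y0 - x0)) <= 2 * d.
Proof. intros. case_split_R; lra. Qed.

Lemma variation_drift_bound A0 A1 A2 A3 B0 B1 B2 B3 d1 d2 d3 :
  Rabs (A1 - A0) <= d1 -> Rabs (B1 - B0) <= d1 -> Rabs (A2 - A1) <= d2 ->
  Rabs (B2 - B1) <= d2 -> Rabs (A3 - A2) <= d3 -> Rabs (B3 - B2) <= d3 ->
  Rabs ((B1 - A1) - (B0 - A0)) + Rabs ((B2 - A2) - (B1 - A1)) + Rabs ((B3 - A3) - (B2 - A2))
  + Rabs ((A3 + B3) - (A0 + B0)) <= 2 * (d1 + d2 + d3).
Proof.
  intros H1 H2 H3 H4 H5 H6.
  pose proof (gap_sum_step _ _ _ H1 H2). pose proof (gap_sum_step _ _ _ H3 H4).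
  pose proof (gap_sum_step _ _ _ H5 H6).
  pose proof (Rabs_triang ((B1 - B0) + (A1 - A0))
                          (((B2 - B1) + (A2 - A1)) + ((B3 - B2) + (A3 - A2)))).
  pose proof (Rabs_triang ((B2 - B1) + (A2 - A1)) ((B3 - B2) + (A3 - A2))).
  replace ((A3 + B3) - (A0 + B0))
    with (((B1 - B0) + (A1 - A0)) + (((B2 - B1) + (A2 - A1)) + ((B3 - B2) + (A3 - A2)))) by ring.
  replace ((B1 - A1) - (B0 - A0)) with ((B1 - B0) - (A1 - A0)) by ring.
  replace ((B2 - A2) - (B1 - A1)) with ((B2 - B1) - (A2 - A1)) by ring.
  replace ((B3 - A3) - (B2 - A2)) with ((B3 - B2) - (A3 - A2)) by ring. lra.
Qed.

Lemma gaxis_point_R pu pv qu qv : gaxis_point R_arith pu pv qu qv =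
  Rmax (Rmax (Rmin pv qv) 2)
       (Rmin (if Rle_dec pv qv then (pu + qu + pv + qv) / 2 else (pv + qv - pu - qu) / 2)
             (Rmax (Rmax pv qv) 2)).
Proof. reflexivity. Qed.

Lemma gturn_a_R pu pv qu qv :
  gturn_a R_arith pu pv qu qv = Rmin (Rmax 2 (Rmin (pv - pu) (qv - qu))) (Rmax (0 - qu) 2).
Proof. reflexivity. Qed.

Lemma gturn_b_R pu pv qu qv :
  gturn_b R_arith pu pv qu qv = Rmin (Rmax 2 (Rmin (pv - pu) (qv - qu))) (Rmax pv 2).
Proof. reflexivity. Qed.

Lemma gsel4_R a b x y : gsel4 R_arith a b x y = if Rle_dec a b then x else y.
Proof.
  destruct x as [[[? ?] ?] ?], y as [[[? ?] ?] ?]. simpl. destruct (Rle_dec a b); reflexivity.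
Qed.

Lemma gaxis_point_ge2 pu pv qu qv : 2 <= gaxis_point R_arith pu pv qu qv.
Proof. rewrite gaxis_point_R. eapply Rle_trans; [| apply Rmax_l]. apply Rmax_r. Qed.

Lemma gturn_a_ge2 pu pv qu qv : 2 <= gturn_a R_arith pu pv qu qv.
Proof. rewrite gturn_a_R. case_split_R; lra. Qed.

Lemma gturn_b_ge2 pu pv qu qv : 2 <= gturn_b R_arith pu pv qu qv.
Proof. rewrite gturn_b_R. case_split_R; lra. Qed.

Lemma maxabs_00 y : maxabs (0 - 0) (y - y) = 0.
Proof. unfold maxabs. rewrite Rminus_diag, Rminus_diag, Rabs_R0. apply Rmax_left; lra. Qed.

Lemma gaxis_point_optimal_pos pu pv qu qv su sv x :
  0 <= pu -> 0 <= pv -> qu <= 0 -> 0 <= qv -> 2 <= x ->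
  let y := gaxis_point R_arith pu pv qu qv in
  lbound pu pv 0 y 0 y qu qv su sv <= lbound pu pv 0 x 0 x qu qv su sv.
Proof.
  intros. subst y. unfold lbound. rewrite !maxabs_00. apply lbound_mono.
  - lra.
  - rewrite gaxis_point_R, Rminus_diag. case_split_R; lra.
  - set (f := maxabs (0 - pu) (x - pv)). set (h := maxabs (qu - 0) (qv - x)).
    assert (pu <= f /\ x - pv <= f /\ pv - x <= f) by (unfold f, maxabs; case_split_R; lra).
    assert (- qu <= h /\ qv - x <= h /\ x - qv <= h) by (unfold h, maxabs; case_split_R; lra).
    clearbody f h. unfold maxabs. rewrite gaxis_point_R. case_split_R; lra.
Qed.

Lemma gaxis_point_optimal pu pv qu qv su sv x :
  0 <= pu -> 0 <= pv -> qu <= 0 -> 0 <= qv -> 2 <= Rabs x ->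
  let y := gaxis_point R_arith pu pv qu qv in
  lbound pu pv 0 y 0 y qu qv su sv <= lbound pu pv 0 x 0 x qu qv su sv.
Proof.
  intros H1 H2 H3 H4 Hx y. subst y. destruct (Rabs_cases x) as [[Hx0 E] | [Hx0 E]]; rewrite E in Hx.
  - apply gaxis_point_optimal_pos; auto.
  - eapply Rle_trans; [apply (gaxis_point_optimal_pos _ _ _ _ _ _ 2); lra |].
    unfold lbound. rewrite !maxabs_00. apply lbound_mono.
    + lra.
    + rewrite !Rminus_diag. case_split_R; lra.
    + unfold maxabs. case_split_R; lra.
Qed.

Lemma gturn_optimal pu pv qu qv su sv a b :
  0 <= pu -> 0 <= pv -> qu <= 0 -> qv <= 0 -> a <= -2 -> 2 <= b ->
  lbound pu pv 0 (gturn_b R_arith pu pv qu qv) (0 - gturn_a R_arith pu pv qu qv) 0 qu qv su sv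
  <= lbound pu pv 0 b a 0 qu qv su sv.
Proof.
  intros. unfold lbound. apply lbound_mono.
  - rewrite gturn_a_R. case_split_R; lra.
  - rewrite gturn_b_R. case_split_R; lra.
  - set (f1 := maxabs (0 - pu) (b - pv)). set (f2 := maxabs (a - 0) (0 - b)).
    set (f3 := maxabs (qu - a) (qv - 0)).
    assert (pu <= f1 /\ b - pv <= f1 /\ pv - b <= f1) by (unfold f1, maxabs; case_split_R; lra).
    assert (- a <= f2 /\ b <= f2) by (unfold f2, maxabs; case_split_R; lra).
    assert (qu - a <= f3 /\ a - qu <= f3 /\ - qv <= f3) by (unfold f3, maxabs; case_split_R; lra).
    clearbody f1 f2 f3. unfold maxabs. rewrite gturn_a_R, gturn_b_R. case_split_R; lra.
Qed.

Section LowerBound.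
Variables (U0 U1 V0 V1 : R -> R) (a b : R).
Hypothesis H : uv_motion U0 U1 V0 V1 a b.
Local Notation du := (gap U0 U1).
Local Notation dv := (gap V0 V1).
Local Notation su := (drift U0 U1 a b).
Local Notation sv := (drift V0 V1 a b).

(** Over each of the pieces [a, t1], [t1, t2], [t2, b] all four coordinates
    move by at most the length of the piece. *)
Lemma lbound_le_duration t1 t2 : a <= t1 <= t2 -> t2 <= b ->
  lbound (du a) (dv a) (du t1) (dv t1) (du t2) (dv t2) (du b) (dv b) su sv <= b - a.
Proof.
  intros Ht1 Ht2. destruct H as [Hab L0 L1 L2 L3 _].
  assert (Step : forall f, lipschitz 1 f a b -> Rabs (f t1 - f a) <= t1 - a /\
            Rabs (f t2 - f t1) <= t2 - t1 /\ Rabs (f b - f t2) <= b - t2).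
  { intros f Lf. rewrite <- (Rmult_1_l (t1 - a)), <- (Rmult_1_l (t2 - t1)), <- (Rmult_1_l (b - t2)).
    repeat split; apply (lipschitz_forward 1 f a b); auto; lra. }
  destruct (Step _ L0) as [u0a [u0b u0c]]. destruct (Step _ L1) as [u1a [u1b u1c]].
  destruct (Step _ L2) as [v0a [v0b v0c]]. destruct (Step _ L3) as [v1a [v1b v1c]].
  pose proof (variation_drift_bound _ _ _ _ _ _ _ _ _ _ _ u0a u1a u0b u1b u0c u1c).
  pose proof (variation_drift_bound _ _ _ _ _ _ _ _ _ _ _ v0a v1a v0b v1b v0c v1c).
  pose proof (gap_step _ _ _ _ _ u0a u1a) as gu1. pose proof (gap_step _ _ _ _ _ u0b u1b) as gu2.
  pose proof (gap_step _ _ _ _ _ u0c u1c) as gu3. pose proof (gap_step _ _ _ _ _ v0a v1a) as gv1.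
  pose proof (gap_step _ _ _ _ _ v0b v1b) as gv2. pose proof (gap_step _ _ _ _ _ v0c v1c) as gv3.
  unfold lbound, maxabs, gap, drift.
  apply Rmult_le_reg_r with 2; [lra |]. unfold Rdiv. rewrite Rmult_assoc, Rinv_l, Rmult_1_r by lra.
  apply Rmax_lub; [apply Rmax_lub; lra |].
  pose proof (Rmax_lub _ _ _ gu1 gv1). pose proof (Rmax_lub _ _ _ gu2 gv2).
  pose proof (Rmax_lub _ _ _ gu3 gv3). lra.
Qed.

Lemma apart_on_axis t : a <= t <= b -> du t = 0 -> 2 <= Rabs (dv t).
Proof.
  intros Ht E. pose proof (uvm_apart _ _ _ _ _ _ H t Ht) as Hap. unfold apart in Hap.
  rewrite E, Rabs_R0 in Hap. lra.
Qed.

Lemma lbound_axis_le_duration : 0 <= du a -> 0 <= dv a -> du b <= 0 -> 0 <= dv b ->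
  let y := gaxis_point R_arith (du a) (dv a) (du b) (dv b) in
  lbound (du a) (dv a) 0 y 0 y (du b) (dv b) su sv <= b - a.
Proof.
  intros H1 H2 H3 H4 y. subst y. pose proof (uvm_le _ _ _ _ _ _ H) as Hab.
  assert (exists t, a <= t <= b /\ du t = 0) as [t [Ht Hz]].
  { destruct (Req_dec (du a) 0) as [E | E]; [exists a; split; [lra | auto] |].
    destruct (lipschitz_first_zero 2 du a b) as [r [Hr [Hr0 _]]]; try lra.
    - apply lipschitz_gap; apply H.
    - exists r. split; [lra | auto]. }
  pose proof (lbound_le_duration t t ltac:(lra) ltac:(lra)) as W.
  rewrite Hz in W. eapply Rle_trans; [| exact W].
  apply gaxis_point_optimal; auto. apply apart_on_axis; auto.
Qed.

(** After [du] vanishes at [s], [min du dv < 0] forces [du < 0] until [dv] first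
    vanishes at [r]: the gap turns through [(0, >= 2)] and then [(<= -2, 0)]. *)
Lemma lbound_turn_le_duration_at s : 0 <= du a -> 0 <= dv a -> du b < 0 -> dv b < 0 ->
  a <= s < b -> du s = 0 -> 0 <= dv s -> (forall t, s < t <= b -> Rmin (du t) (dv t) < 0) ->
  lbound (du a) (dv a) 0 (gturn_b R_arith (du a) (dv a) (du b) (dv b))
    (0 - gturn_a R_arith (du a) (dv a) (du b) (dv b)) 0 (du b) (dv b) su sv <= b - a.
Proof.
  intros Hua Hva Hub Hvb Hs Hus Hvs Hneg.
  pose proof (uvm_le _ _ _ _ _ _ H) as Hab.
  pose proof (lipschitz_gap _ _ _ _ (uvm_U0 _ _ _ _ _ _ H) (uvm_U1 _ _ _ _ _ _ H)) as Lu.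
  pose proof (lipschitz_gap _ _ _ _ (uvm_V0 _ _ _ _ _ _ H) (uvm_V1 _ _ _ _ _ _ H)) as Lv.
  pose proof (apart_on_axis s ltac:(lra) Hus) as Hvs2. rewrite Rabs_right in Hvs2 by lra.
  destruct (lipschitz_first_zero 2 dv s b) as [r [Hr [Hvr Hpos]]]; try lra.
  { apply (lipschitz_restrict _ _ a b); auto; lra. }
  assert (Hur : du r <= 0).
  { apply (lipschitz_nonpos_of_neg_before 2 du a b s r); try lra; auto.
    intros t Ht. specialize (Hneg t ltac:(lra)). specialize (Hpos t ltac:(lra)).
    destruct (Rmin_cases (du t) (dv t)) as [[? E] | [? E]]; rewrite E in Hneg; lra. }
  assert (Hur2 : du r <= -2).
  { pose proof (uvm_apart _ _ _ _ _ _ H r ltac:(lra)) as Hap. unfold apart in Hap.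
    rewrite Hvr, Rabs_R0, Rabs_left1 in Hap by lra. lra. }
  pose proof (lbound_le_duration s r ltac:(lra) ltac:(lra)) as W.
  rewrite Hus, Hvr in W. eapply Rle_trans; [| exact W].
  apply gturn_optimal; lra.
Qed.

End LowerBound.

(** The last zero of [min du dv] decides which axis the gap crosses first. *)
Lemma lbound_turn_le_duration U0 U1 V0 V1 a b : uv_motion U0 U1 V0 V1 a b ->
  let du := gap U0 U1 in let dv := gap V0 V1 in
  let su := drift U0 U1 a b in let sv := drift V0 V1 a b in
  0 <= du a -> 0 <= dv a -> du b < 0 -> dv b < 0 ->
  lbound (du a) (dv a) 0 (gturn_b R_arith (du a) (dv a) (du b) (dv b))
    (0 - gturn_a R_arith (du a) (dv a) (du b) (dv b)) 0 (du b) (dv b) su sv <= b - a \/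
  lbound (du a) (dv a) (gturn_b R_arith (dv a) (du a) (dv b) (du b)) 0
    0 (0 - gturn_a R_arith (dv a) (du a) (dv b) (du b)) (du b) (dv b) su sv <= b - a.
Proof.
  intros H du dv su sv Hua Hva Hub Hvb. subst du dv su sv.
  pose proof (uvm_le _ _ _ _ _ _ H) as Hab.
  set (phi := fun t => Rmin (gap U0 U1 t) (gap V0 V1 t)).
  assert (Lphi : lipschitz 2 phi a b).
  { pose proof (lipschitz_gap _ _ _ _ (uvm_U0 _ _ _ _ _ _ H) (uvm_U1 _ _ _ _ _ _ H)) as Lu.
    pose proof (lipschitz_gap _ _ _ _ (uvm_V0 _ _ _ _ _ _ H) (uvm_V1 _ _ _ _ _ _ H)) as Lv.
    intros s t Hs Ht. specialize (Lu s t Hs Ht). specialize (Lv s t Hs Ht). unfold phi.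
    revert Lu Lv.
    generalize (gap U0 U1 s) (gap U0 U1 t) (gap V0 V1 s) (gap V0 V1 t) (2 * Rabs (s - t)).
    intros. case_split_R; lra. }
  destruct (lipschitz_last_zero 2 phi a b) as [s [Hs [Hs0 Hneg]]]; auto; try lra.
  { unfold phi. apply Rmin_glb; auto. }
  { unfold phi. destruct (Rmin_cases (gap U0 U1 b) (gap V0 V1 b)) as [[_ ->] | [_ ->]]; lra. }
  unfold phi in Hs0, Hneg.
  destruct (Rmin_cases (gap U0 U1 s) (gap V0 V1 s)) as [[Hc E] | [Hc E]]; rewrite E in Hs0.
  - left. apply (lbound_turn_le_duration_at _ _ _ _ _ _ H s); auto; lra.
  - right. rewrite lbound_swap.
    apply (lbound_turn_le_duration_at V0 V1 U0 U1 a b (uv_motion_swap _ _ _ _ _ _ H) s);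
      auto; try lra.
    intros t Ht. rewrite Rmin_comm. auto.
Qed.

Lemma lbound_waypoints_pos_le_duration U0 U1 V0 V1 a b : uv_motion U0 U1 V0 V1 a b ->
  0 <= gap U0 U1 a -> 0 <= gap V0 V1 a ->
  lbound_via (gap U0 U1 a) (gap V0 V1 a) (gap U0 U1 b) (gap V0 V1 b)
    (drift U0 U1 a b) (drift V0 V1 a b)
    (gwaypoints_pos R_arith (gap U0 U1 a) (gap V0 V1 a) (gap U0 U1 b) (gap V0 V1 b)
       (drift U0 U1 a b) (drift V0 V1 a b)) <= b - a.
Proof.
  intros H Hua Hva. pose proof (uvm_le _ _ _ _ _ _ H) as Hab.
  unfold gwaypoints_pos. rewrite !gsel4_R. cbv zeta.
  change (ocst R_arith 0) with 0. change (gneg R_arith ?x) with (0 - x).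
  destruct (Rle_dec 0 (gap U0 U1 b)); destruct (Rle_dec 0 (gap V0 V1 b)); cbn [lbound_via].
  - apply (lbound_le_duration _ _ _ _ _ _ H a a); lra.
  - rewrite lbound_swap.
    apply (lbound_axis_le_duration _ _ _ _ _ _ (uv_motion_swap _ _ _ _ _ _ H)); lra.
  - apply lbound_axis_le_duration; auto; lra.
  - rewrite !gbound_R.
    destruct (lbound_turn_le_duration _ _ _ _ _ _ H Hua Hva ltac:(lra) ltac:(lra)) as [W | W];
      match goal with |- context [if Rle_dec ?x ?y then _ else _] => destruct (Rle_dec x y) end;
      cbn [lbound_via]; lra.
Qed.

Lemma gsgn_R x : gsgn R_arith x = if Rle_dec 0 x then 1 else -1.
Proof. reflexivity. Qed.

Lemma gsgn_abs x : Rabs (gsgn R_arith x) = 1.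
Proof. rewrite gsgn_R. destruct (Rle_dec 0 x); [apply Rabs_R1 | rewrite Rabs_left; lra]. Qed.

Lemma gsgn_mul_nonneg x : 0 <= gsgn R_arith x * x.
Proof. rewrite gsgn_R. destruct (Rle_dec 0 x); nra. Qed.

Lemma gap_scale e U0 U1 t : gap (fun t => e * U0 t) (fun t => e * U1 t) t = e * gap U0 U1 t.
Proof. unfold gap. ring. Qed.

Lemma drift_scale e U0 U1 a b :
  Rabs e = 1 -> drift (fun t => e * U0 t) (fun t => e * U1 t) a b = drift U0 U1 a b.
Proof.
  intros He. unfold drift.
  replace (e * U0 b + e * U1 b - (e * U0 a + e * U1 a))
    with (e * (U0 b + U1 b - (U0 a + U1 a))) by ring.
  rewrite Rabs_mult, He. ring.
Qed.

Lemma lbound_waypoints_le_duration U0 U1 V0 V1 a b : uv_motion U0 U1 V0 V1 a b ->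
  lbound_via (gap U0 U1 a) (gap V0 V1 a) (gap U0 U1 b) (gap V0 V1 b)
    (drift U0 U1 a b) (drift V0 V1 a b)
    (gwaypoints R_arith (gap U0 U1 a) (gap V0 V1 a) (gap U0 U1 b) (gap V0 V1 b)
       (drift U0 U1 a b) (drift V0 V1 a b)) <= b - a.
Proof.
  intros H. unfold gwaypoints. cbv zeta.
  set (e := gsgn R_arith (gap U0 U1 a)). set (f := gsgn R_arith (gap V0 V1 a)).
  pose proof (lbound_waypoints_pos_le_duration _ _ _ _ _ _
                (uv_motion_flip e f _ _ _ _ _ _ (gsgn_abs _) (gsgn_abs _) H)) as W.
  rewrite !gap_scale, !drift_scale in W by apply gsgn_abs.
  specialize (W (gsgn_mul_nonneg _) (gsgn_mul_nonneg _)). fold e f in W.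
  change (omul R_arith e ?x) with (e * x). change (omul R_arith f ?x) with (f * x).
  destruct (gwaypoints_pos R_arith _ _ _ _ _ _) as [[[w1u w1v] w2u] w2v].
  cbn [lbound_via] in *. rewrite lbound_flip in W by apply gsgn_abs. exact W.
Qed.

(** * Feasibility of the waypoint route *)

Definition same_quadrant (au av bu bv : R) : Prop :=
  ((0 <= au /\ 0 <= bu) \/ (au <= 0 /\ bu <= 0)) /\
  ((0 <= av /\ 0 <= bv) \/ (av <= 0 /\ bv <= 0)).

Definition safe_leg (au av bu bv : R) : Prop :=
  same_quadrant au av bu bv /\ apart au av /\ apart bu bv.

Definition safe_route (pu pv qu qv : R) (w : R * R * R * R) : Prop :=
  let '(w1u, w1v, w2u, w2v) := w in
  safe_leg pu pv w1u w1v /\ safe_leg w1u w1v w2u w2v /\ safe_leg w2u w2v qu qv.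

(** Within a closed quadrant [|u| + |v|] is affine, so it stays [>= 2] along the segment. *)
Lemma apart_lerp au av bu bv l : safe_leg au av bu bv -> 0 <= l <= 1 ->
  apart (au + l * (bu - au)) (av + l * (bv - av)).
Proof.
  unfold safe_leg, same_quadrant, apart. intros [[Hu Hv] [Ha Hb]] Hl.
  assert (Pos : forall x y, 0 <= x -> 0 <= y -> Rabs (x + l * (y - x)) = x + l * (y - x))
    by (intros; apply Rabs_right; nra).
  assert (Neg : forall x y, x <= 0 -> y <= 0 -> Rabs (x + l * (y - x)) = - (x + l * (y - x)))
    by (intros; apply Rabs_left1; nra).
  destruct Hu as [[? ?] | [? ?]]; destruct Hv as [[? ?] | [? ?]];
    [rewrite (Pos au bu), (Pos av bv) | rewrite (Pos au bu), (Neg av bv)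
    | rewrite (Neg au bu), (Pos av bv) | rewrite (Neg au bu), (Neg av bv)]; auto;
    rewrite ?(Rabs_right au), ?(Rabs_right bu), ?(Rabs_right av), ?(Rabs_right bv),
      ?(Rabs_left1 au), ?(Rabs_left1 bu), ?(Rabs_left1 av), ?(Rabs_left1 bv) in * by lra; nra.
Qed.

Lemma unit_abs_cases e : Rabs e = 1 -> e = 1 \/ e = -1.
Proof. intros He. destruct (Rabs_cases e) as [[_ E] | [_ E]]; rewrite E in He; lra. Qed.

Lemma safe_leg_flip e f au av bu bv : Rabs e = 1 -> Rabs f = 1 ->
  safe_leg au av bu bv -> safe_leg (e * au) (f * av) (e * bu) (f * bv).
Proof.
  intros He Hf [Hq [Ha Hb]]. unfold safe_leg, apart in *. rewrite !Rabs_mult, He, Hf, !Rmult_1_l.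
  split; [| lra]. unfold same_quadrant in *.
  destruct (unit_abs_cases e He) as [-> | ->]; destruct (unit_abs_cases f Hf) as [-> | ->]; lra.
Qed.

Lemma waypoints_pos_safe pu pv qu qv su sv : 0 <= pu -> 0 <= pv -> apart pu pv -> apart qu qv ->
  safe_route pu pv qu qv (gwaypoints_pos R_arith pu pv qu qv su sv).
Proof.
  intros Hu Hv Fp Fq. unfold gwaypoints_pos. rewrite !gsel4_R. cbv zeta.
  change (ocst R_arith 0) with 0. change (gneg R_arith ?x) with (0 - x).
  unfold safe_route, safe_leg, same_quadrant, apart in *.
  pose proof (gaxis_point_ge2 pv pu qv qu) as G1. pose proof (gaxis_point_ge2 pu pv qu qv) as G2.
  pose proof (gturn_a_ge2 pu pv qu qv) as G3. pose proof (gturn_b_ge2 pu pv qu qv) as G4.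
  pose proof (gturn_a_ge2 pv pu qv qu) as G5. pose proof (gturn_b_ge2 pv pu qv qu) as G6.
  revert G1 G2 G3 G4 G5 G6.
  generalize (gaxis_point R_arith pv pu qv qu) (gaxis_point R_arith pu pv qu qv)
    (gturn_a R_arith pu pv qu qv) (gturn_b R_arith pu pv qu qv)
    (gturn_a R_arith pv pu qv qu) (gturn_b R_arith pv pu qv qu).
  intros xE xN aN bN aE bE ? ? ? ? ? ?.
  destruct (Rle_dec 0 qu); destruct (Rle_dec 0 qv); [| | | destruct (Rle_dec _ _)];
    rewrite ?Rabs_R0, ?(Rabs_right xE), ?(Rabs_right xN), ?(Rabs_right bN), ?(Rabs_right bE),
      ?(Rabs_left1 (0 - aN)), ?(Rabs_left1 (0 - aE)) by lra;
    (split; [| split]); (split; [| split]); try lra.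
Qed.

Lemma waypoints_safe pu pv qu qv su sv : apart pu pv -> apart qu qv ->
  safe_route pu pv qu qv (gwaypoints R_arith pu pv qu qv su sv).
Proof.
  intros Fp Fq. unfold gwaypoints. cbv zeta.
  set (e := gsgn R_arith pu). set (f := gsgn R_arith pv).
  assert (He : Rabs e = 1) by apply gsgn_abs. assert (Hf : Rabs f = 1) by apply gsgn_abs.
  assert (Flip : forall x y, apart x y -> apart (e * x) (f * y))
    by (unfold apart; intros; rewrite !Rabs_mult, He, Hf; lra).
  pose proof (waypoints_pos_safe (e * pu) (f * pv) (e * qu) (f * qv) su sv
                (gsgn_mul_nonneg _) (gsgn_mul_nonneg _) (Flip _ _ Fp) (Flip _ _ Fq)) as W.
  change (omul R_arith e ?x) with (e * x). change (omul R_arith f ?x) with (f * x).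
  destruct (gwaypoints_pos R_arith _ _ _ _ _ _) as [[[w1u w1v] w2u] w2v].
  destruct W as [S1 [S2 S3]].
  assert (Ee : e * e = 1) by (destruct (unit_abs_cases e He) as [-> | ->]; ring).
  assert (Ef : f * f = 1) by (destruct (unit_abs_cases f Hf) as [-> | ->]; ring).
  apply (safe_leg_flip e f) in S1, S2, S3; auto.
  rewrite <- !Rmult_assoc, Ee, Ef, !Rmult_1_l in S1, S3. exact (conj S1 (conj S2 S3)).
Qed.

Lemma proportional_split s c0 c1 c2 D : 0 <= c0 -> 0 <= c1 -> 0 <= c2 -> D = c0 + c1 + c2 ->
  Rabs s <= D ->
  Rabs (s * c0 / D) <= c0 /\ Rabs (s * c1 / D) <= c1 /\ Rabs (s - s * c0 / D - s * c1 / D) <= c2.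
Proof.
  intros H0 H1 H2 HD Hs. destruct (Req_dec D 0) as [E | E].
  - assert (s = 0) by (pose proof (Rabs_pos s); destruct (Rabs_cases s) as [[? E'] | [? E']]; lra).
    subst s. unfold Rdiv. rewrite !Rmult_0_l, !Rminus_0_r, Rabs_R0. lra.
  - assert (HDp : 0 < D) by (pose proof (Rabs_pos s); lra).
    assert (Part : forall c, 0 <= c -> Rabs (s * c / D) <= c).
    { intros c Hc. unfold Rdiv. rewrite !Rabs_mult, (Rabs_right c), (Rabs_right (/ D))
        by (try apply Rle_ge, Rlt_le, Rinv_0_lt_compat; lra).
      apply Rle_trans with (D * c * / D); [| right; field; lra].
      apply Rmult_le_compat_r; [apply Rlt_le, Rinv_0_lt_compat; lra | nra]. }
    split; [apply Part; auto | split; [apply Part; auto |]].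
    replace (s - s * c0 / D - s * c1 / D) with (s * c2 / D) by (subst D; field; lra).
    apply Part; auto.
Qed.

(** Each robot moves by half the change of the sum, plus or minus half the change
    of the gap. *)
Lemma norm1_moves_le z0 z1 z0' z1' d :
  (forall c, Rabs ((coord c z0' + coord c z1') - (coord c z0 + coord c z1))
             <= 2 * d - Rabs ((coord c z1' - coord c z0') - (coord c z1 - coord c z0))) ->
  norm1 (psub z0' z0) <= d /\ norm1 (psub z1' z1) <= d.
Proof.
  intros H. split; apply norm1_le_of_coords; intros c; specialize (H c); revert H;
    generalize (coord c z0) (coord c z1) (coord c z0') (coord c z1'); intros; case_split_R; lra.
Qed.

Lemma lerp_coord c z0 z1 ta tb t :
  coord c (lerp z0 z1 ta tb t) = coord c z0 + (t - ta) / (tb - ta) * (coord c z1 - coord c z0).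
Proof. destruct c, z0, z1; unfold coord, ucoord, vcoord, lerp, padd, pscale, psub; simpl; ring. Qed.

Lemma lerp_pair_apart z0 z1 y0 y1 ta tb t : ta <= t <= tb ->
  safe_leg (coord true y0 - coord true z0) (coord false y0 - coord false z0)
           (coord true y1 - coord true z1) (coord false y1 - coord false z1) ->
  norminf (psub (lerp y0 y1 ta tb t) (lerp z0 z1 ta tb t)) >= 1.
Proof.
  intros Ht Hs. apply norminf_ge1_of_apart.
  pose proof (apart_lerp _ _ _ _ _ Hs (ratio_in_unit ta tb t Ht)) as F.
  change (apart (coord true (lerp y0 y1 ta tb t) - coord true (lerp z0 z1 ta tb t))
                (coord false (lerp y0 y1 ta tb t) - coord false (lerp z0 z1 ta tb t))).
  rewrite !lerp_coord. set (l := (t - ta) / (tb - ta)) in *. unfold apart in *.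
  match goal with |- _ <= Rabs ?x + Rabs ?y =>
    match type of F with _ <= Rabs ?x' + Rabs ?y' =>
      replace x with x' by ring; replace y with y' by ring end end.
  exact F.
Qed.

Section Construction.
Variables (A B : nat -> pt) (w1u w1v w2u w2v : R).
Let i := real_inputs A B.
Let w := (w1u, w1v, w2u, w2v).
Local Notation wp := (gwp R_arith i w).
Local Notation leg := (gleg R_arith i w).
Local Notation len := (gleg_len R_arith i w).
Local Notation T := (gmakespan R_arith i w).
Local Notation dur := (gduration R_arith i w).
Local Notation tau := (gtime R_arith i w).
Local Notation P := (gpos R_arith i w).
Local Notation shift := (gsum_shift R_arith i).
Local Notation share := (gshare R_arith i w).

Hypothesis Hsafe : forall k, (k < 3)%nat ->
  safe_leg (wp true k) (wp false k) (wp true (S k)) (wp false (S k)).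

Lemma makespan_bounds :
  (forall c, Rabs (leg c 0) + Rabs (leg c 1) + Rabs (leg c 2) + Rabs (shift c) <= 2 * T) /\
  len 0 + len 1 + len 2 <= 2 * T.
Proof.
  unfold gmakespan, gleg_len. rewrite gbound_R, !gabs_R, !gmaxabs_R. unfold lbound.
  match goal with |- context [Rmax (Rmax ?x ?y) ?z / 2] =>
    pose proof (Rmax_l (Rmax x y) z); pose proof (Rmax_r (Rmax x y) z);
    pose proof (Rmax_l x y); pose proof (Rmax_r x y) end.
  split; [intros [|] |]; unfold gleg; change (osub R_arith ?x ?y) with (x - y); lra.
Qed.

Lemma len_ge c k : Rabs (leg c k) <= len k.
Proof.
  unfold gleg_len. rewrite gmaxabs_R. unfold maxabs. destruct c; [apply Rmax_l | apply Rmax_r].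
Qed.

Lemma time_steps : tau 1 - tau 0 = len 0 / 2 + gslack R_arith i w /\
  tau 2 - tau 1 = len 1 / 2 + gslack R_arith i w /\
  tau 3 - tau 2 = len 2 / 2 + gslack R_arith i w /\ 0 <= gslack R_arith i w.
Proof.
  pose proof makespan_bounds as [_ HT]. cbn [gtime]. unfold gduration, gslack, ghalf.
  change (ocst R_arith 0) with 0. change (ocst R_arith 2) with 2. change (ocst R_arith 3) with 3.
  cbn [oadd osub odiv R_arith]. repeat split; lra.
Qed.

Lemma capacity c k : (k < 3)%nat -> 0 <= 2 * (tau (S k) - tau k) - Rabs (leg c k).
Proof.
  intros Hk. pose proof time_steps as [E0 [E1 [E2 Hsl]]]. pose proof (len_ge c k).
  destruct k as [| [| [| k]]]; [rewrite E0 | rewrite E1 | rewrite E2 | lia]; lra.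
Qed.

Definition sum_at (c : bool) (j : nat) : R := coord c (P 0 j) + coord c (P 1 j).

Lemma coord_of_uv c u v :
  coord c (ghalf R_arith (u + v), ghalf R_arith (u - v)) = if c then u else v.
Proof. destruct c; unfold coord, ucoord, vcoord, ghalf; simpl; field. Qed.

Lemma pos_start r : (r < 2)%nat -> P r 0 = A r.
Proof. intros Hr. destruct r as [| [| r]]; try lia; cbn; destruct (A _); reflexivity. Qed.

Lemma pos_end r : (r < 2)%nat -> P r 3 = B r.
Proof. intros Hr. destruct r as [| [| r]]; try lia; cbn; destruct (B _); reflexivity. Qed.

Lemma wp_start c : wp c 0 = coord c (A 1) - coord c (A 0).
Proof. destruct c; reflexivity. Qed.

Lemma wp_end c : wp c 3 = coord c (B 1) - coord c (B 0).
Proof. destruct c; reflexivity. Qed.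

Lemma grobot_R r s d : grobot R_arith r s d = match r with 0 => (s - d) / 2 | _ => (s + d) / 2 end.
Proof. destruct r; reflexivity. Qed.

Lemma pos_gap c j : (j <= 3)%nat -> coord c (P 1 j) - coord c (P 0 j) = wp c j.
Proof.
  intros Hj. destruct j as [| [| [| [| j]]]]; try lia.
  - rewrite pos_start, pos_start, wp_start by lia. reflexivity.
  - cbn [gpos]. rewrite !coord_of_uv, !grobot_R. destruct c; field.
  - cbn [gpos]. rewrite !coord_of_uv, !grobot_R. destruct c; field.
  - rewrite pos_end, pos_end, wp_end by lia. reflexivity.
Qed.

Lemma sum_start_eq c : gsum_start R_arith i c = coord c (A 0) + coord c (A 1).
Proof. destruct c; reflexivity. Qed.

Lemma shift_eq c : shift c = (coord c (B 0) + coord c (B 1)) - (coord c (A 0) + coord c (A 1)).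
Proof. destruct c; reflexivity. Qed.

Lemma sum_steps c :
  sum_at c 1 - sum_at c 0 = share c 0 /\ sum_at c 2 - sum_at c 1 = share c 1 /\
  sum_at c 3 - sum_at c 2 = shift c - share c 0 - share c 1.
Proof.
  unfold sum_at. rewrite !pos_start, !pos_end by lia. cbn [gpos]. rewrite !coord_of_uv, !grobot_R.
  rewrite shift_eq. destruct c; cbn [gsum oadd R_arith];
    rewrite sum_start_eq; cbn [coord]; repeat split; field.
Qed.

Lemma time_durations : tau 1 - tau 0 = dur 0 /\ tau 2 - tau 1 = dur 1.
Proof. cbn [gtime oadd ocst R_arith]. split; ring. Qed.

Lemma time_mono k : (k < 3)%nat -> tau k <= tau (S k).
Proof.
  intros Hk. pose proof time_steps as [E0 [E1 [E2 Hsl]]].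
  pose proof (Rle_trans _ _ _ (Rabs_pos (leg true 0)) (len_ge true 0)).
  pose proof (Rle_trans _ _ _ (Rabs_pos (leg true 1)) (len_ge true 1)).
  pose proof (Rle_trans _ _ _ (Rabs_pos (leg true 2)) (len_ge true 2)).
  destruct k as [| [| [| k]]]; try lia; lra.
Qed.

Lemma share_eq c k : (k < 2)%nat ->
  share c k = shift c * (2 * (tau (S k) - tau k) - Rabs (leg c k))
              / (2 * T - gvariation R_arith i w c).
Proof.
  intros Hk. destruct time_durations as [E0 E1].
  destruct k as [| [| k]]; try lia; [rewrite E0 | rewrite E1];
    unfold gshare; rewrite gabs_R; reflexivity.
Qed.

Lemma sum_step_bound c k : (k < 3)%nat ->
  Rabs (sum_at c (S k) - sum_at c k) <= 2 * (tau (S k) - tau k) - Rabs (leg c k).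
Proof.
  intros Hk. pose proof makespan_bounds as [HT _]. specialize (HT c).
  destruct (proportional_split (shift c) _ _ _ (2 * T - gvariation R_arith i w c)
              (capacity c 0 ltac:(lia)) (capacity c 1 ltac:(lia)) (capacity c 2 ltac:(lia)))
    as [B0 [B1 B2]].
  - unfold gvariation. rewrite !gabs_R. cbn [gtime oadd ocst R_arith]. ring.
  - unfold gvariation. rewrite !gabs_R. cbn [oadd R_arith]. lra.
  - destruct (sum_steps c) as [S0 [S1 S2]].
    rewrite <- (share_eq c 0), <- (share_eq c 1) in * by lia.
    destruct k as [| [| [| k]]]; try lia; [rewrite S0 | rewrite S1 | rewrite S2]; assumption.
Qed.

Lemma leg_norm1 r k : (r < 2)%nat -> (k < 3)%nat ->
  norm1 (psub (P r (S k)) (P r k)) <= tau (S k) - tau k.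
Proof.
  intros Hr Hk.
  destruct (norm1_moves_le (P 0 k) (P 1 k) (P 0 (S k)) (P 1 (S k)) (tau (S k) - tau k)) as [N0 N1].
  - intros c. rewrite !pos_gap by lia. exact (sum_step_bound c k Hk).
  - destruct r as [| [| r]]; [exact N0 | exact N1 | lia].
Qed.

Lemma leg_apart k t : (k < 3)%nat -> tau k <= t <= tau (S k) ->
  norminf (psub (lerp (P 1 k) (P 1 (S k)) (tau k) (tau (S k)) t)
                (lerp (P 0 k) (P 0 (S k)) (tau k) (tau (S k)) t)) >= 1.
Proof.
  intros Hk Ht. apply lerp_pair_apart; [exact Ht |]. rewrite !pos_gap by lia. exact (Hsafe k Hk).
Qed.

Lemma path_legs r : (r < 2)%nat ->
  0 <= tau 1 /\ tau 1 <= tau 2 /\ tau 2 <= tau 3 /\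
  norm1 (psub (P r 1) (P r 0)) <= tau 1 - 0 /\ norm1 (psub (P r 2) (P r 1)) <= tau 2 - tau 1 /\
  norm1 (psub (P r 3) (P r 2)) <= tau 3 - tau 2.
Proof.
  intros Hr. exact (conj (time_mono 0 ltac:(lia)) (conj (time_mono 1 ltac:(lia))
    (conj (time_mono 2 ltac:(lia)) (conj (leg_norm1 r 0 Hr ltac:(lia))
    (conj (leg_norm1 r 1 Hr ltac:(lia)) (leg_norm1 r 2 Hr ltac:(lia))))))).
Qed.

Let M (r : nat) : R -> pt := path3 (P r 0) (P r 1) (P r 2) (P r 3) (tau 1) (tau 2) (tau 3).

Lemma motion_leg r k t : (r < 2)%nat -> (k < 3)%nat -> tau k <= t <= tau (S k) ->
  M r t = lerp (P r k) (P r (S k)) (tau k) (tau (S k)) t.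
Proof.
  intros Hr Hk Ht. destruct (path_legs r Hr) as [T0 [T1 [T2 [N0 [N1 N2]]]]].
  unfold M. destruct k as [| [| [| k]]]; try lia.
  - apply path3_leg1; lra.
  - apply path3_leg2; [lra | exact N0 | lra].
  - apply path3_leg3; try assumption; lra.
Qed.

Lemma motion_at r j : (r < 2)%nat -> (j <= 3)%nat -> M r (tau j) = P r j.
Proof.
  intros Hr Hj. destruct (path_legs r Hr) as [T0 [T1 [T2 [N0 [N1 N2]]]]].
  unfold M. destruct j as [| [| [| [| j]]]]; try lia.
  - apply path3_at0; lra.
  - apply path3_at1; assumption.
  - apply path3_at2; assumption.
  - apply path3_at3; assumption.
Qed.

Lemma motion_trajectory r : (r < 2)%nat -> trajectory 0 T (M r).
Proof.
  intros Hr. destruct (path_legs r Hr) as [T0 [T1 [T2 [N0 [N1 N2]]]]].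
  apply path3_trajectory; assumption.
Qed.

Lemma motion_separated t : 0 <= t <= T -> norminf (psub (M 1 t) (M 0 t)) >= 1.
Proof.
  intros Ht. destruct (path_legs 0 ltac:(lia)) as [T0 [T1 [T2 _]]].
  assert (exists k, (k < 3)%nat /\ tau k <= t <= tau (S k)) as [k [Hk Htk]].
  { assert (tau 0 = 0) by reflexivity. assert (tau 3 = T) by reflexivity.
    destruct (Rle_dec t (tau 1)); [exists 0%nat | destruct (Rle_dec t (tau 2));
      [exists 1%nat | exists 2%nat]]; split; [lia | lra | lia | lra | lia | lra]. }
  rewrite !(motion_leg _ k t) by (lia || lra). apply leg_apart; auto.
Qed.

Lemma schedule_feasible : exists M, feasible_from_to 2 A B 0 T M /\ follows_pl 2 3 tau P M.
Proof.
  exists M. split; [split; [split |] |].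
  - destruct (path_legs 0 ltac:(lia)) as [T0 [T1 [T2 _]]].
    split; [change T with (tau 3); lra | exact motion_trajectory].
  - intros t Ht r r' Hr Hr' Hne. pose proof (motion_separated t Ht) as Sep.
    destruct r as [| [| r]], r' as [| [| r']]; try lia; [rewrite norminf_psub_sym |]; exact Sep.
  - intros r Hr. rewrite <- (pos_start r Hr), <- (pos_end r Hr).
    exact (conj (motion_at r 0 Hr ltac:(lia)) (motion_at r 3 Hr ltac:(lia))).
  - split; [| split].
    + intros j Hj. apply time_mono, Hj.
    + intros r j Hr Hj. apply motion_at; assumption.
    + intros r j t Hr Hj _ Ht. apply motion_leg; assumption.
Qed.

End Construction.

Lemma gmakespan_R i w : gmakespan R_arith i w =
  lbound_via (grel_start R_arith i true) (grel_start R_arith i false)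
    (grel_end R_arith i true) (grel_end R_arith i false)
    (Rabs (gsum_shift R_arith i true)) (Rabs (gsum_shift R_arith i false)) w.
Proof. destruct w as [[[? ?] ?] ?]. unfold gmakespan. rewrite gbound_R, !gabs_R. reflexivity. Qed.

Lemma gwaypoints_of_R i : gwaypoints_of R_arith i =
  gwaypoints R_arith (grel_start R_arith i true) (grel_start R_arith i false)
    (grel_end R_arith i true) (grel_end R_arith i false)
    (Rabs (gsum_shift R_arith i true)) (Rabs (gsum_shift R_arith i false)).
Proof. unfold gwaypoints_of. rewrite !gabs_R. reflexivity. Qed.

Lemma uv_motion_of_feasible A B t0 t1 M : feasible_from_to 2 A B t0 t1 M ->
  uv_motion (fun t => ucoord (M 0%nat t)) (fun t => ucoord (M 1%nat t))
            (fun t => vcoord (M 0%nat t)) (fun t => vcoord (M 1%nat t)) t0 t1.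
Proof.
  intros [[[Hle Htraj] Hconf] _].
  destruct (Htraj 0%nat ltac:(lia)) as [_ [L0 _]]. destruct (Htraj 1%nat ltac:(lia)) as [_ [L1 _]].
  split; auto; try (intros s t Hs Ht; rewrite Rmult_1_l; eapply Rle_trans;
                     [apply uv_le_norm1 | first [apply L0 | apply L1]]; auto).
  intros t Ht. apply apart_of_norminf_ge1, (Hconf t Ht 0%nat 1%nat); lia.
Qed.

Lemma makespan_lower_bound A B t0 t1 M : feasible_from_to 2 A B t0 t1 M ->
  gmakespan R_arith (real_inputs A B) (gwaypoints_of R_arith (real_inputs A B)) <= t1 - t0.
Proof.
  intros HM.
  pose proof (lbound_waypoints_le_duration _ _ _ _ _ _ (uv_motion_of_feasible _ _ _ _ _ HM)) as W.
  destruct HM as [_ HE].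
  destruct (HE 0%nat ltac:(lia)) as [E00 E01]. destruct (HE 1%nat ltac:(lia)) as [E10 E11].
  unfold gap, drift in W. rewrite E00, E01, E10, E11 in W.
  rewrite gmakespan_R, gwaypoints_of_R. exact W.
Qed.

Lemma waypoints_of_safe A B : is_config 2 A -> is_config 2 B ->
  let w := gwaypoints_of R_arith (real_inputs A B) in
  forall k, (k < 3)%nat ->
  safe_leg (gwp R_arith (real_inputs A B) w true k) (gwp R_arith (real_inputs A B) w false k)
    (gwp R_arith (real_inputs A B) w true (S k)) (gwp R_arith (real_inputs A B) w false (S k)).
Proof.
  intros HA HB w. subst w. set (i := real_inputs A B).
  pose proof (waypoints_safe (grel_start R_arith i true) (grel_start R_arith i false)
    (grel_end R_arith i true) (grel_end R_arith i false)
    (Rabs (gsum_shift R_arith i true)) (Rabs (gsum_shift R_arith i false))) as S.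
  rewrite <- gwaypoints_of_R in S.
  specialize (S ltac:(apply apart_of_norminf_ge1, HA; lia)
                ltac:(apply apart_of_norminf_ge1, HB; lia)).
  destruct (gwaypoints_of R_arith i) as [[[w1u w1v] w2u] w2v]. destruct S as [S0 [S1 S2]].
  intros k Hk. destruct k as [| [| [| k]]]; try lia; assumption.
Qed.

Lemma follows_pl_ext k K tau tau' P P' M : follows_pl k K tau P M ->
  (forall j, tau j = tau' j) -> (forall i j, P i j = P' i j) -> follows_pl k K tau' P' M.
Proof.
  intros [H1 [H2 H3]] Et EP. split; [| split].
  - intros j Hj. rewrite <- !Et. auto.
  - intros i j Hi Hj. rewrite <- EP, <- Et. auto.
  - intros i j t Hi Hj Hlt Ht. rewrite <- !EP, <- !Et. rewrite <- !Et in Hlt, Ht. auto.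
Qed.

Theorem theorem3p3 :
  exists (T : rterm) (K : nat) (tau : nat -> rterm)
         (Px Py : nat -> nat -> rterm),
  forall A B : nat -> pt,
    is_config 2 A -> is_config 2 B ->
    let env := input2 A B in
    let tT := reval env T in
    (exists M : nat -> R -> pt,
        feasible_from_to 2 A B 0 tT M /\
        reval env (tau 0%nat) = 0 /\ reval env (tau K) = tT /\
        follows_pl 2 K (fun j => reval env (tau j))
          (fun i j => (reval env (Px i j), reval env (Py i j))) M) /\
    (forall (t0 t1 : R) (M : nat -> R -> pt),
        feasible_from_to 2 A B t0 t1 M -> tT <= t1 - t0).
Proof.
  set (w := gwaypoints_of term_arith term_inputs).
  exists (gtime term_arith term_inputs w 3), 3%nat, (gtime term_arith term_inputs w),
    (fun r j => fst (gpos term_arith term_inputs w r j)),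
    (fun r j => snd (gpos term_arith term_inputs w r j)).
  intros A B HA HB env tT.
  assert (Et : forall j, reval env (gtime term_arith term_inputs w j)
              = gtime R_arith (real_inputs A B) (gwaypoints_of R_arith (real_inputs A B)) j).
  { intros j. rewrite reval_gtime. unfold w. rewrite rv4_gwaypoints_of. reflexivity. }
  assert (EP : forall r j, (reval env (fst (gpos term_arith term_inputs w r j)),
                            reval env (snd (gpos term_arith term_inputs w r j)))
              = gpos R_arith (real_inputs A B) (gwaypoints_of R_arith (real_inputs A B)) r j).
  { intros r j. rewrite reval_gpos. unfold w. rewrite rv4_gwaypoints_of. reflexivity. }
  unfold tT. rewrite Et. split.
  - pose proof (waypoints_of_safe A B HA HB) as Hsafe. cbv zeta in Hsafe.
    destruct (gwaypoints_of R_arith (real_inputs A B)) as [[[w1u w1v] w2u] w2v].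
    destruct (schedule_feasible A B w1u w1v w2u w2v Hsafe) as [M [HF HP]].
    exists M. split; [exact HF | split; [rewrite Et; reflexivity | split; [reflexivity |]]].
    eapply follows_pl_ext; [exact HP | |]; intros; symmetry; [apply Et | apply EP].
  - intros t0 t1 M HM. exact (makespan_lower_bound A B t0 t1 M HM).
Qed.
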